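(* Let $C_1$ and $C_2$ be constant-time two-sided error PACAs. Then there are constant-time two-sided error PACAs $C_\cup$ and $C_\cap$ such that $L(C_\cup)=L(C_1)\cup L(C_2)$ and $L(C_\cap)=L(C_1)\cap L(C_2)$.
   Context: PACA: a bounded one-dimensional CA with state set $Q$, input alphabet $\Sigma\subseteq Q$, accepting states $A\subseteq Q$, boundary symbol $\$$ and two local transition functions $\delta_0,\delta_1$; at each step every cell independently tosses a fair coin $c$ and updates by $\delta_c$ applied to its left neighbor, itself and its right neighbor ($\$$ beyond borders). A computation on input $x\in\Sigma^n$ is accepting if at some step all cells are simultaneously in $A$. Time complexity $T$: every accepting computation on inputs of length $n$ first reaches $A^n$ at a step $<T(n)$; constant-time means $T$ is bounded by a constant. A two-sided error PACA $C$ for $L$ accepts every $x\in L$ with probability $\ge2/3$ and every $x\notin L$ with probability $\le1/3$; $L(C)=L$. *)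

From HB Require Import structures.
From mathcomp Require Import all_boot all_order all_algebra.
From mathcomp Require Import classical_sets boolp reals Rstruct.
From Stdlib Require Rdefinitions.

Set Implicit Arguments.
Unset Strict Implicit.
Unset Printing Implicit Defensive.

Import Order.TTheory GRing.Theory Num.Theory.
Local Open Scope ring_scope.

(* A PACA over input alphabet Sigma.
   - Q      : finite state set
   - inj    : the inclusion Sigma \subseteq Q (injective)
   - acc    : the set A of accepting states
   - delta b: the local transition function delta_b; a neighbour [None]
              stands for the boundary symbol $. *)
Record PACA (Sigma : finType) := MkPACA {
  Q : finType;
  inj : Sigma -> Q;
  inj_injective : injective inj;
  acc : pred Q;
  delta : bool -> option Q -> Q -> option Q -> Q
}.

Section PACA_semantics.
Variables (Sigma : finType) (C : PACA Sigma).

Definition config (n : nat) := {ffun 'I_n -> Q C}.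
Definition coins (n : nat) := {ffun 'I_n -> bool}.

Definition step n (c : coins n) (x : config n) : config n :=
  [ffun i : 'I_n =>
     @delta _ C (c i)
       (if nat_of_ord i == 0%N then None else omap x (insub (nat_of_ord i).-1))
       (x i)
       (omap x (insub (nat_of_ord i).+1))].

Definition init (w : seq Sigma) : config (size w) :=
  [ffun i : 'I_(size w) => @inj _ C (tnth (in_tuple w) i)].

Fixpoint conf n (x0 : config n) (cs : nat -> coins n) (k : nat) : config n :=
  if k is k'.+1 then step (cs k') (conf x0 cs k') else x0.

Definition all_acc n (x : config n) : bool := [forall i, @acc _ C (x i)].

Definition coins_of n t (cs : t.-tuple (coins n)) : nat -> coins n :=
  fun j => nth [ffun => false] cs j.

Definition acc_within (w : seq Sigma) t (cs : t.-tuple (coins (size w))) : bool :=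
  [exists k : 'I_t.+1, all_acc (conf (init w) (coins_of cs) k)].

Definition acc_prob_within (w : seq Sigma) (t : nat) : Rdefinitions.R :=
  (#|[pred cs : t.-tuple (coins (size w)) | acc_within cs]|%:R
    / #|{: t.-tuple (coins (size w))}|%:R)%R.

(* probability that the computation on w is accepting (reaches A^n at some
   step): the limit (= supremum) of the increasing probabilities above *)
Definition acc_prob (w : seq Sigma) : Rdefinitions.R :=
  sup [set acc_prob_within w t | t in [set: nat]].

Definition constant_time : Prop :=
  exists T : nat, forall (w : seq Sigma) (cs : nat -> coins (size w)) (k : nat),
    all_acc (conf (init w) cs k) ->
    (forall j, (j < k)%N -> ~~ all_acc (conf (init w) cs j)) ->
    (k < T)%N.

(* C is a two-sided error PACA for L (so L(C) = L) *)
Definition two_sided_for (L : seq Sigma -> Prop) : Prop :=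
  forall w : seq Sigma,
    (L w -> (2 / 3 <= acc_prob w)%R) /\ (~ L w -> (acc_prob w <= 1 / 3)%R).

End PACA_semantics.

From HB Require Import structures.
From mathcomp Require Import all_boot all_order all_algebra.
From mathcomp Require Import classical_sets boolp reals Rstruct.
From mathcomp Require Import ring lra zify.

Set Implicit Arguments.
Unset Strict Implicit.
Unset Printing Implicit Defensive.

Import Order.TTheory GRing.Theory Num.Theory.

(* Running C and then D on disjoint segments of the coin sequence inside one
   PACA, whose shared clock afterwards enumerates candidate acceptance times
   of C and D, yields constant-time PACAs accepting with probability p_C p_D
   and p_C + p_D - p_C p_D.  The time bounds make these probabilities ratios of
   finite counts, which factor over the two independent coin segments.
   Combining copies of one PACA in this way realizes the polynomial [amplify],
   which turns an error bound 1/3 into 91/500, and a single [or]/[and] of two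
   amplified PACAs keeps the error below 1/3. *)

Section CatTuple.
Variable X : finType.

Lemma cat_tuple_inj a b :
  injective (fun xy : a.-tuple X * b.-tuple X => cat_tuple xy.1 xy.2).
Proof.
move=> [x1 y1] [x2 y2] /= /(congr1 val) /= /eqP.
rewrite eqseq_cat ?size_tuple // => /andP[/eqP e1 /eqP e2].
by congr pair; apply: val_inj.
Qed.

Lemma card_cat_tuple a b (P : {pred (a + b).-tuple X}) :
  #|P| = #|[pred xy : a.-tuple X * b.-tuple X | cat_tuple xy.1 xy.2 \in P]|.
Proof.
have [g _ gf] :
    bijective (fun xy : a.-tuple X * b.-tuple X => cat_tuple xy.1 xy.2).
  apply: inj_card_bij; first exact: cat_tuple_inj.
  by rewrite card_prod !card_tuple expnD.
rewrite -(card_image (@cat_tuple_inj a b)); apply: eq_card => z.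
apply/idP/idP => [Pz | /fintype.imageP[xy + ->]]; last by rewrite inE.
by rewrite -[z]gf (fintype.mem_image (@cat_tuple_inj a b)) inE gf.
Qed.

End CatTuple.

Lemma card_coins_gt0 n : 0 < #|coins n|.
Proof. by apply/card_gt0P; exists [ffun=> false]. Qed.

Section Acceptance.
Variables (Sigma : finType) (C : PACA Sigma).

Lemma eq_conf n (x0 : config C n) (cs cs' : nat -> coins n) k :
  (forall j, j < k -> cs j = cs' j) -> conf x0 cs k = conf x0 cs' k.
Proof.
elim: k => [//|k IH] ecs /=.
by rewrite ecs // IH // => j jk; apply/ecs/ltnW.
Qed.

Lemma coins_of_catl n a b (x : a.-tuple (coins n)) (y : b.-tuple (coins n)) j :
  j < a -> coins_of (cat_tuple x y) j = coins_of x j.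
Proof. by move=> ja; rewrite /coins_of nth_cat size_tuple ja. Qed.

Lemma coins_of_catr n a b (x : a.-tuple (coins n)) (y : b.-tuple (coins n)) j :
  coins_of (cat_tuple x y) (a + j) = coins_of y j.
Proof. by rewrite /coins_of nth_cat size_tuple ltnNge leq_addr /= addKn. Qed.

Definition time_bounded (T : nat) : Prop :=
  forall (w : seq Sigma) (cs : nat -> coins (size w)) (k : nat),
    all_acc (conf (init C w) cs k) ->
    (forall j, j < k -> ~~ all_acc (conf (init C w) cs j)) -> k < T.

Definition accepts_before w T (cs : nat -> coins (size w)) :=
  [exists k : 'I_T, all_acc (conf (init C w) cs k)].

Definition acc_set w t := [pred cs : t.-tuple (coins (size w)) | acc_within C cs].

Lemma acc_prob_withinE w t : acc_prob_within C w t =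
  (#|acc_set w t|%:R / (#|coins (size w)| ^ t)%:R)%R.
Proof. by rewrite /acc_prob_within card_tuple. Qed.

Lemma acc_prob_within_ge0 w t : (0 <= acc_prob_within C w t)%R.
Proof. by rewrite acc_prob_withinE divr_ge0 ?ler0n. Qed.

Lemma acc_prob_within_le1 w t : (acc_prob_within C w t <= 1)%R.
Proof.
rewrite acc_prob_withinE ler_pdivrMr; last by rewrite ltr0n expn_gt0 card_coins_gt0.
by rewrite mul1r ler_nat -card_tuple max_card.
Qed.

Lemma card_acc_set_mono w a d :
  #|acc_set w a| * #|coins (size w)| ^ d <= #|acc_set w (a + d)|.
Proof.
rewrite (card_cat_tuple (acc_set w (a + d))) -card_tuple -cardX.
apply: subset_leq_card; apply/fintype.subsetP => -[x y].
rewrite !inE /= => /andP[/existsP[k acck] _].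
have kad : k < (a + d).+1 by rewrite ltnS (leq_trans _ (leq_addr d a)) // -ltnS.
apply/existsP; exists (Ordinal kad) => /=.
rewrite (eq_conf _ (cs' := coins_of x)) // => j jk.
by apply: coins_of_catl; apply: leq_trans jk _; rewrite -ltnS.
Qed.

Lemma acc_prob_within_mono w a d :
  (acc_prob_within C w a <= acc_prob_within C w (a + d))%R.
Proof.
rewrite !acc_prob_withinE expnD; set N := #|coins (size w)|.
have N_gt0 k : (0 < (N ^ k)%:R :> Rdefinitions.R)%R.
  by rewrite ltr0n expn_gt0 card_coins_gt0.
have -> : (#|acc_set w a|%:R / (N ^ a)%:R =
    (#|acc_set w a| * N ^ d)%:R / (N ^ a * N ^ d)%:R :> Rdefinitions.R)%R.
  by rewrite !natrM; field; rewrite !gt_eqF.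
rewrite ler_pM2r ?ler_nat ?card_acc_set_mono //.
by rewrite invr_gt0 natrM mulr_gt0.
Qed.

Section TimeBounded.
Variables (T : nat) (C_T : time_bounded T).

Lemma accepts_before_of_all_acc w (cs : nat -> coins (size w)) k :
  all_acc (conf (init C w) cs k) -> accepts_before T cs.
Proof.
move=> acck; have ex_acc : exists k, all_acc (conf (init C w) cs k) by exists k.
case: (ex_minnP ex_acc) => m accm min_m.
have mT : m < T.
  apply: (C_T accm) => j jm; apply/negP => /min_m.
  by rewrite leqNgt jm.
by apply/existsP; exists (Ordinal mT).
Qed.

Lemma acc_within_accepts_before w t (cs : t.-tuple (coins (size w))) :
  T <= t.+1 -> acc_within C cs = accepts_before T (coins_of cs).
Proof.
move=> Tt; apply/existsP/idP => [[k /accepts_before_of_all_acc //]|].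
case/existsP=> k acck.
by exists (Ordinal (leq_trans (ltn_ord k) Tt)).
Qed.

Lemma accepts_before_cat w a b (x : a.-tuple (coins (size w)))
    (y : b.-tuple (coins (size w))) :
  T <= a ->
  accepts_before T (coins_of (cat_tuple x y)) = accepts_before T (coins_of x).
Proof.
move=> Ta; apply: eq_existsb => k; congr all_acc; apply: eq_conf => j jk.
by apply: coins_of_catl; apply: leq_trans (ltn_trans jk (ltn_ord k)) Ta.
Qed.

Lemma card_acc_set_stable w a d : T <= a ->
  #|acc_set w (a + d)| = #|acc_set w a| * #|coins (size w)| ^ d.
Proof.
move=> Ta; have Tad : T <= (a + d).+1 by rewrite ltnW // ltnS (leq_trans Ta) ?leq_addr.
rewrite (card_cat_tuple (acc_set w (a + d))) -card_tuple -cardX.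
apply: eq_card => -[x y]; rewrite !inE /= andbT (acc_within_accepts_before _ Tad).
by rewrite accepts_before_cat // -acc_within_accepts_before // ltnW.
Qed.

Lemma acc_prob_within_stable w a d : T <= a ->
  acc_prob_within C w (a + d) = acc_prob_within C w a.
Proof.
move=> Ta; rewrite !acc_prob_withinE card_acc_set_stable // expnD !natrM.
have N_neq0 k : ((#|coins (size w)| ^ k)%:R != 0 :> Rdefinitions.R)%R.
  by rewrite pnatr_eq0 -lt0n expn_gt0 card_coins_gt0.
by field; rewrite !N_neq0.
Qed.

(* [acc_prob] is a supremum over all step bounds; the time bound makes the
   sequence constant from [T] on. *)
Lemma acc_prob_eq_within w : acc_prob C w = acc_prob_within C w T.
Proof.
have le_T t : (acc_prob_within C w t <= acc_prob_within C w T)%R.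
  have [tT|Tt] := leqP t T; first by rewrite -(subnKC tT) acc_prob_within_mono.
  by rewrite -(subnKC (ltnW Tt)) acc_prob_within_stable.
apply/eqP; rewrite eq_le; apply/andP; split.
  apply: ge_sup; first by exists (acc_prob_within C w 0); exists 0.
  by move=> _ [t _ <-].
apply: ub_le_sup; last by exists T.
by exists (acc_prob_within C w T) => _ [t _ <-].
Qed.

Lemma acc_probE w t : T <= t ->
  acc_prob C w = (#|acc_set w t|%:R / (#|coins (size w)| ^ t)%:R)%R.
Proof.
move=> Tt; rewrite acc_prob_eq_within.
by rewrite -(acc_prob_within_stable w (t - T) (leqnn T)) subnKC ?acc_prob_withinE.
Qed.

Lemma acc_prob_nil w : size w = 0 -> acc_prob C w = 1%R.
Proof.
move=> w0; rewrite acc_prob_eq_within acc_prob_withinE.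
rewrite -card_tuple (eq_card (B := predT)) ?divff // => [|cs].
  by rewrite pnatr_eq0 -lt0n card_tuple expn_gt0 card_coins_gt0.
rewrite !inE; apply/existsP; exists ord0; apply/forallP => i.
by move: (ltn_ord i); rewrite {2}w0.
Qed.

End TimeBounded.
End Acceptance.

Lemma acc_prob_ge0_le1 (Sigma : finType) (C : PACA Sigma) w :
  constant_time C -> (0 <= acc_prob C w <= 1)%R.
Proof.
case=> T C_T; rewrite (acc_prob_eq_within C_T).
by rewrite acc_prob_within_ge0 acc_prob_within_le1.
Qed.

Lemma omap_omap_eq (A B I : Type) (f : A -> B) (x : I -> A) (y : I -> B) :
  (forall j, f (x j) = y j) -> forall o, omap f (omap x o) = omap y o.
Proof. by move=> fxy [j|] //=; rewrite fxy. Qed.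

(* A cell of [seq_comp] holds a clock, a state of [C], a state of [D] and the
   acceptance records of [C] at steps [< TC] and of [D] at steps [< TD].  It
   runs [C] for [TC] steps, then [D] for [TD] steps on fresh coins, and then
   spends one step per slot [s]: at step [TC + TD + enum_rank s] it accepts iff
   the records selected by [u s] and [v s] are set.  The slot is fixed by the
   clock, which all cells share, so acceptance at that step means that the
   selected steps were accepting in every cell. *)
Section SeqComp.
Variables (Sigma : finType) (C D : PACA Sigma) (TC TD : nat) (Sl : finType).
Variables (u : Sl -> option 'I_TC) (v : Sl -> option 'I_TD).

Definition seq_len := TC + TD + #|Sl|.

Definition seq_state :=
  ('I_seq_len.+1 * Q C * Q D * {ffun 'I_TC -> bool} * {ffun 'I_TD -> bool})%type.

Definition clock (x : seq_state) : nat := x.1.1.1.1.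
Definition stateC (x : seq_state) : Q C := x.1.1.1.2.
Definition stateD (x : seq_state) : Q D := x.1.1.2.
Definition recC (x : seq_state) : {ffun 'I_TC -> bool} := x.1.2.
Definition recD (x : seq_state) : {ffun 'I_TD -> bool} := x.2.

Definition tick (x : seq_state) : 'I_seq_len.+1 := inord (minn (clock x).+1 seq_len).

Definition slot_ok (s : Sl) (r1 : 'I_TC -> bool) (r2 : 'I_TD -> bool) :=
  (if u s is Some j then r1 j else true) && (if v s is Some j then r2 j else true).

Definition seq_acc (x : seq_state) : bool :=
  [&& TC + TD <= clock x, clock x < seq_len &
   [forall s, (enum_rank s == clock x - (TC + TD) :> nat) ==>
              slot_ok s (recC x) (recD x)]].

Definition seq_delta (b : bool) (l : option seq_state) (x : seq_state)
    (r : option seq_state) : seq_state :=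
  if clock x < TC then
    (tick x, delta b (omap stateC l) (stateC x) (omap stateC r), stateD x,
     [ffun j : 'I_TC => if j == clock x :> nat then acc (stateC x) else recC x j],
     recD x)
  else if clock x < TC + TD then
    (tick x, stateC x, delta b (omap stateD l) (stateD x) (omap stateD r), recC x,
     [ffun j : 'I_TD => if j == clock x - TC :> nat then acc (stateD x) else recD x j])
  else (tick x, stateC x, stateD x, recC x, recD x).

Definition seq_inj (a : Sigma) : seq_state :=
  (ord0, inj C a, inj D a, [ffun=> false], [ffun=> false]).

Lemma seq_inj_injective : injective seq_inj.
Proof. by move=> a b [] /(@inj_injective _ C). Qed.

Definition seq_comp : PACA Sigma :=
  @MkPACA Sigma seq_state seq_inj seq_inj_injective seq_acc seq_delta.

Lemma tick_clock x m : clock x = minn m seq_len ->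
  (tick x : nat) = minn m.+1 seq_len.
Proof. by move=> ck; rewrite /tick inordK ck; lia. Qed.

Lemma eq_slot_ok s r1 r1' r2 r2' : r1 =1 r1' -> r2 =1 r2' ->
  slot_ok s r1 r2 = slot_ok s r1' r2'.
Proof.
by move=> e1 e2; rewrite /slot_ok; case: (u s) => [j1|]; case: (v s) => [j2|];
  rewrite ?e1 ?e2.
Qed.

Lemma slot_ok_forall (I : finType) s (r1 : 'I_TC -> I -> bool)
    (r2 : 'I_TD -> I -> bool) :
  [forall i, slot_ok s (r1^~ i) (r2^~ i)] =
  slot_ok s (fun j => [forall i, r1 j i]) (fun j => [forall i, r2 j i]).
Proof.
rewrite /slot_ok; case: (u s) => [j1|]; case: (v s) => [j2|] /=.
- apply/forallP/andP => [r12 | [/forallP r1j /forallP r2j] i]; last first.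
    by rewrite r1j r2j.
  by split; apply/forallP => i; case/andP: (r12 i).
- by rewrite andbT; apply: eq_forallb => i; rewrite andbT.
- by [].
- by apply/forallP.
Qed.

Section Run.
Variables (w : seq Sigma) (cs : nat -> coins (size w)).

Definition runS k : config seq_comp (size w) := conf (init seq_comp w) cs k.
Definition runC k : config C (size w) := conf (init C w) cs k.
Definition runD k : config D (size w) := conf (init D w) (fun j => cs (TC + j)) k.

Definition seq_invariant k := forall i,
  [/\ clock (runS k i) = minn k seq_len,
      stateC (runS k i) = runC (minn k TC) i,
      stateD (runS k i) = runD (minn (k - TC) TD) i,
      forall j : 'I_TC, recC (runS k i) j = (j < k) && acc (runC j i) &
      forall j : 'I_TD, recD (runS k i) j = (TC + j < k) && acc (runD j i)].

Lemma seq_invariant0 : seq_invariant 0.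
Proof.
move=> i; rewrite /runS /runC /runD sub0n !min0n /= !ffunE.
by split=> // j; rewrite ffunE.
Qed.

Lemma runS_step k i : runS k.+1 i = seq_delta (cs k i)
  (if i == 0 :> nat then None else omap (runS k) (insub i.-1)) (runS k i)
  (omap (runS k) (insub i.+1)).
Proof. by rewrite /runS /= ffunE. Qed.

Lemma runC_step k i : runC k.+1 i = delta (cs k i)
  (if i == 0 :> nat then None else omap (runC k) (insub i.-1)) (runC k i)
  (omap (runC k) (insub i.+1)).
Proof. by rewrite /runC /= ffunE. Qed.

Lemma runD_step k i : runD k.+1 i = delta (cs (TC + k) i)
  (if i == 0 :> nat then None else omap (runD k) (insub i.-1)) (runD k i)
  (omap (runD k) (insub i.+1)).
Proof. by rewrite /runD /= ffunE. Qed.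

Lemma seq_invariant_stepC k : k < TC -> seq_invariant k -> seq_invariant k.+1.
Proof.
move=> kTC inv i; have [ck qc qd rc rd] := inv i.
have qcs j : stateC (runS k j) = runC k j.
  by case: (inv j) => _ -> _ _ _; rewrite (minn_idPl (ltnW kTC)).
rewrite runS_step /seq_delta ck.
have -> : minn k seq_len < TC by rewrite (leq_ltn_trans (geq_minl _ _)).
split=> /=; first exact: tick_clock.
- rewrite (minn_idPl kTC) runC_step qcs.
  by rewrite (fun_if (omap stateC)) !(omap_omap_eq qcs).
- by rewrite qd; congr (runD _ i); lia.
- move=> j; rewrite ffunE /= rc qcs (minn_idPl _); last by rewrite /seq_len; lia.
  by case: eqP => [-> | /eqP nej]; rewrite ?ltnSn //; congr andb; lia.
- by move=> j; rewrite rd; congr andb; lia.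
Qed.

Lemma seq_invariant_stepD k : TC <= k < TC + TD ->
  seq_invariant k -> seq_invariant k.+1.
Proof.
case/andP=> TCk kTD inv i; have [ck qc qd rc rd] := inv i.
have qds j : stateD (runS k j) = runD (k - TC) j.
  by case: (inv j) => _ _ -> _ _; rewrite (minn_idPl _) //; lia.
have mk : minn k seq_len = k by rewrite /seq_len; lia.
rewrite runS_step /seq_delta ck mk ltnNge TCk kTD.
split=> /=; first exact: tick_clock.
- by rewrite qc !(minn_idPr _) // ltnW.
- rewrite qds (_ : minn (k.+1 - TC) TD = (k - TC).+1); last by lia.
  by rewrite runD_step (fun_if (omap stateD)) !(omap_omap_eq qds) subnKC.
- by move=> j; have jT := ltn_ord j; rewrite rc; congr andb; lia.
- move=> j; rewrite ffunE /= rd.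
  case: eqP => [ej | /eqP nej]; last by congr andb; lia.
  by rewrite qds -ej (_ : TC + j < k.+1) //; lia.
Qed.

Lemma seq_invariant_step_idle k : TC + TD <= k ->
  seq_invariant k -> seq_invariant k.+1.
Proof.
move=> TDk inv i; have [ck qc qd rc rd] := inv i.
have TDck : TC + TD <= clock (runS k i) by rewrite ck /seq_len; lia.
rewrite runS_step /seq_delta ltnNge (leq_trans (leq_addr _ _) TDck) ltnNge TDck.
split=> /=; first exact: tick_clock.
- by rewrite qc !(minn_idPr _) //; lia.
- by rewrite qd !(minn_idPr _) //; lia.
- by move=> j; have jT := ltn_ord j; rewrite rc; congr andb; lia.
- by move=> j; have jT := ltn_ord j; rewrite rd; congr andb; lia.
Qed.

Lemma seq_invariantP k : seq_invariant k.
Proof.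
elim: k => [|k inv]; first exact: seq_invariant0.
have [kTC|TCk] := ltnP k TC; first exact: seq_invariant_stepC.
have [kTD|TDk] := ltnP k (TC + TD); last exact: seq_invariant_step_idle.
by apply: seq_invariant_stepD; rewrite ?TCk.
Qed.

Lemma all_acc_runS k : 0 < size w -> all_acc (runS k) =
  [&& TC + TD <= k, k < seq_len &
   [forall s, (enum_rank s == k - (TC + TD) :> nat) ==>
      slot_ok s (fun j => all_acc (runC j)) (fun j => all_acc (runD j))]].
Proof.
move=> w_gt0; have inv := seq_invariantP k.
have acc_cell i : acc (runS k i) =
    [&& TC + TD <= k, k < seq_len &
     [forall s, (enum_rank s == k - (TC + TD) :> nat) ==>
        slot_ok s (fun j => acc (runC j i)) (fun j => acc (runD j i))]].
  have [ck _ _ rc rd] := inv i; rewrite /= /seq_acc ck.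
  have [kL|Lk] := ltnP k seq_len; last by rewrite ltnn /= !andbF.
  rewrite kL; case TDk: (TC + TD <= k) => //=.
  apply: eq_forallb => s; congr (_ ==> _); apply: eq_slot_ok => j.
    by rewrite rc (leq_trans (ltn_ord j)) // (leq_trans (leq_addr TD TC)).
  by rewrite rd (leq_trans _ TDk) // ltn_add2l.
rewrite /all_acc; under eq_forallb => i do rewrite acc_cell.
case: (TC + TD <= k); case: (k < seq_len) => /=;
  try by apply/negbTE/forallPn; exists (Ordinal w_gt0).
apply/forallP/forallP => [acc_i s | acc_s i].
  rewrite -slot_ok_forall; apply/implyP => rs; apply/forallP => i.
  by have /forallP/(_ s) := acc_i i; rewrite rs.
apply/forallP => s; apply/implyP => rs.
by have := implyP (acc_s s) rs; rewrite -slot_ok_forall => /forallP.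
Qed.

End Run.

Lemma seq_comp_time_bounded : time_bounded seq_comp seq_len.+1.
Proof.
move=> w cs k acck min_k.
have [w0|w_gt0] := posnP (size w).
  case: k acck min_k => // k _ /(_ 0 isT) /negP[].
  by apply/forallP => i; move: (ltn_ord i); rewrite {2}w0.
by move: acck; rewrite -/(runS cs k) all_acc_runS // => /and3P[_ /ltnW].
Qed.

Definition seq_accepts w a b (x : a.-tuple (coins (size w)))
    (y : b.-tuple (coins (size w))) :=
  [exists s, slot_ok s (fun j => all_acc (conf (init C w) (coins_of x) j))
                       (fun j => all_acc (conf (init D w) (coins_of y) j))].

Lemma acc_within_seq_comp w b (x : TC.-tuple (coins (size w)))
    (y : b.-tuple (coins (size w))) :
  0 < size w -> seq_len <= TC + b ->
  acc_within seq_comp (cat_tuple x y) = seq_accepts x y.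
Proof.
move=> w_gt0 Lb; set cs := coins_of (cat_tuple x y).
have eC (j : 'I_TC) : all_acc (runC cs j) = all_acc (conf (init C w) (coins_of x) j).
  by congr all_acc; apply: eq_conf => l lj; rewrite /cs coins_of_catl // (ltn_trans lj).
have eD (j : 'I_TD) : all_acc (runD cs j) = all_acc (conf (init D w) (coins_of y) j).
  by congr all_acc; apply: eq_conf => l _; rewrite /cs coins_of_catr.
apply/existsP/existsP => [[k] | [s ok_s]].
  rewrite -/(runS cs k) all_acc_runS // => /and3P[TDk kL /forallP ok].
  have sL : k - (TC + TD) < #|Sl| by rewrite /seq_len in kL; lia.
  exists (enum_val (Ordinal sL)); rewrite -(eq_slot_ok _ eC eD).
  by have := ok (enum_val (Ordinal sL)); rewrite enum_valK eqxx.
have kL : TC + TD + enum_rank s < (TC + b).+1.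
  by have : enum_rank s < #|Sl| := ltn_ord _; rewrite /seq_len in Lb; lia.
exists (Ordinal kL); rewrite /= -/(runS cs _) all_acc_runS // leq_addr addKn /=.
rewrite /seq_len ltn_add2l ltn_ord; apply/forallP => s'; apply/implyP.
by move=> /eqP/ord_inj/enum_rank_inj ->; rewrite (eq_slot_ok _ eC eD).
Qed.

Definition seq_tail := TD + #|Sl|.+1.

Lemma leq_seq_tail : TD <= seq_tail.
Proof. exact: leq_addr. Qed.

Lemma acc_prob_seq_comp w : 0 < size w ->
  acc_prob seq_comp w =
  (#|[pred xy : TC.-tuple (coins (size w)) * seq_tail.-tuple (coins (size w))
      | seq_accepts xy.1 xy.2]|%:R
   / (#|coins (size w)| ^ TC * #|coins (size w)| ^ seq_tail)%:R)%R.
Proof.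
move=> w_gt0; have LR : seq_len.+1 = TC + seq_tail by rewrite /seq_tail /seq_len; lia.
rewrite (acc_probE seq_comp_time_bounded w (leqnn _)) LR expnD card_cat_tuple.
congr (_%:R / _)%R; apply: eq_card => -[x y]; rewrite !inE /= acc_within_seq_comp //.
by rewrite /seq_tail /seq_len; lia.
Qed.

End SeqComp.

Lemma card_predX_or (X Y : finType) (A : {pred X}) (B : {pred Y}) :
  #|[pred xy : X * Y | (xy.1 \in A) || (xy.2 \in B)]| + #|A| * #|B| =
  #|A| * #|Y| + #|X| * #|B|.
Proof.
rewrite -!cardX -[RHS]cardUI.
by congr (_ + _); apply: eq_card => -[x y]; rewrite !inE /= ?andbT.
Qed.

Section Combinations.
Variables (Sigma : finType) (C D : PACA Sigma) (TC TD : nat).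
Hypotheses (C_TC : time_bounded C TC) (D_TD : time_bounded D TD).

Definition and_selC (s : 'I_TC * 'I_TD) : option 'I_TC := Some s.1.
Definition and_selD (s : 'I_TC * 'I_TD) : option 'I_TD := Some s.2.
Definition and_comp := seq_comp C D and_selC and_selD.

Definition or_selC (s : 'I_TC + 'I_TD) : option 'I_TC :=
  if s is inl j then Some j else None.
Definition or_selD (s : 'I_TC + 'I_TD) : option 'I_TD :=
  if s is inr j then Some j else None.
Definition or_comp := seq_comp C D or_selC or_selD.

Lemma seq_accepts_and w b (x : TC.-tuple (coins (size w)))
    (y : b.-tuple (coins (size w))) : TD <= b.+1 ->
  seq_accepts C D and_selC and_selD x y = acc_within C x && acc_within D y.
Proof.
move=> TDb.
rewrite (acc_within_accepts_before C_TC) // (acc_within_accepts_before D_TD) //.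
apply/existsP/andP => [[[j1 j2] /andP[ok1 ok2]] | [/existsP[j1 ok1] /existsP[j2 ok2]]].
  by split; apply/existsP; [exists j1 | exists j2].
by exists (j1, j2); rewrite /slot_ok /= ok1 ok2.
Qed.

Lemma seq_accepts_or w b (x : TC.-tuple (coins (size w)))
    (y : b.-tuple (coins (size w))) : TD <= b.+1 ->
  seq_accepts C D or_selC or_selD x y = acc_within C x || acc_within D y.
Proof.
move=> TDb.
rewrite (acc_within_accepts_before C_TC) // (acc_within_accepts_before D_TD) //.
apply/existsP/orP => [[[j|j] ok] | [/existsP[j ok] | /existsP[j ok]]].
- by left; apply/existsP; exists j; rewrite /slot_ok /= andbT in ok.
- by right; apply/existsP; exists j.
- by exists (inl j); rewrite /slot_ok /= andbT.
- by exists (inr j).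
Qed.

Lemma acc_prob_and_comp w :
  acc_prob and_comp w = (acc_prob C w * acc_prob D w)%R.
Proof.
have [w0|w_gt0] := posnP (size w).
  rewrite (acc_prob_nil (@seq_comp_time_bounded _ C D _ _ _ and_selC and_selD)) //.
  by rewrite (acc_prob_nil C_TC w0) (acc_prob_nil D_TD w0) mulr1.
rewrite acc_prob_seq_comp // (acc_probE C_TC w (leqnn TC))
  (acc_probE D_TD w (leq_seq_tail TD ('I_TC * 'I_TD)%type)).
rewrite (eq_card (B := [predX acc_set C w TC & acc_set D w _])); last first.
  by move=> [x y]; rewrite !inE /= seq_accepts_and // ltnW // ltnS leq_addr.
by rewrite cardX !natrM invfM mulrACA.
Qed.

Lemma acc_prob_or_comp w : acc_prob or_comp w =
  (acc_prob C w + acc_prob D w - acc_prob C w * acc_prob D w)%R.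
Proof.
have [w0|w_gt0] := posnP (size w).
  rewrite (acc_prob_nil (@seq_comp_time_bounded _ C D _ _ _ or_selC or_selD)) //.
  by rewrite (acc_prob_nil C_TC w0) (acc_prob_nil D_TD w0) mulr1 addrK.
rewrite acc_prob_seq_comp // (acc_probE C_TC w (leqnn TC))
  (acc_probE D_TD w (leq_seq_tail TD ('I_TC + 'I_TD)%type)).
set A := acc_set C w TC; set B := acc_set D w _.
rewrite (eq_card (B := [pred xy | (xy.1 \in A) || (xy.2 \in B)])); last first.
  by move=> [x y]; rewrite !inE /= seq_accepts_or // ltnW // ltnS leq_addr.
have count := card_predX_or A B; rewrite !card_tuple in count.
have -> : (#|[pred xy | (xy.1 \in A) || (xy.2 \in B)]|%:R =
    (#|A| * #|coins (size w)| ^ seq_tail TD ('I_TC + 'I_TD)%type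
     + #|coins (size w)| ^ TC * #|B|)%:R - (#|A| * #|B|)%:R :> Rdefinitions.R)%R.
  by rewrite -count natrD addrK.
have N_neq0 k : ((#|coins (size w)| ^ k)%:R != 0 :> Rdefinitions.R)%R.
  by rewrite pnatr_eq0 -lt0n expn_gt0 card_coins_gt0.
by rewrite !natrD !natrM; field; rewrite !N_neq0.
Qed.

End Combinations.

Lemma and_comp_exists (Sigma : finType) (C D : PACA Sigma) :
  constant_time C -> constant_time D ->
  exists S : PACA Sigma, constant_time S /\
    forall w, acc_prob S w = (acc_prob C w * acc_prob D w)%R.
Proof.
case=> TC C_TC [TD D_TD]; exists (and_comp C D TC TD).
by split; [eexists; apply: seq_comp_time_bounded | apply: acc_prob_and_comp].
Qed.

Lemma or_comp_exists (Sigma : finType) (C D : PACA Sigma) :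
  constant_time C -> constant_time D ->
  exists S : PACA Sigma, constant_time S /\
    forall w, acc_prob S w =
      (acc_prob C w + acc_prob D w - acc_prob C w * acc_prob D w)%R.
Proof.
case=> TC C_TC [TD D_TD]; exists (or_comp C D TC TD).
by split; [eexists; apply: seq_comp_time_bounded | apply: acc_prob_or_comp].
Qed.

Local Open Scope ring_scope.

Section Amplification.
Variable R : realFieldType.
Implicit Types p x y : R.

(* [por] and squaring are the acceptance probabilities of [or_comp] and
   [and_comp] applied to two independent copies. *)
Definition por x y := x + y - x * y.

Definition amplify p := let k := por p p ^+ 2 in por (k ^+ 2) (k ^+ 2).

Lemma por_ge0_le1 x y : 0 <= x <= 1 -> 0 <= y <= 1 -> 0 <= por x y <= 1.
Proof. by rewrite /por => /andP[? ?] /andP[? ?]; apply/andP; split; nra. Qed.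

Lemma exprn_ge0_le1 x n : 0 <= x <= 1 -> 0 <= x ^+ n <= 1.
Proof. by move=> /andP[x0 x1]; rewrite exprn_ge0 ?exprn_ile1. Qed.

Lemma amplify_ge0_le1 p : 0 <= p <= 1 -> 0 <= amplify p <= 1.
Proof.
by move=> p01; apply/por_ge0_le1; do 2!apply/exprn_ge0_le1; apply/por_ge0_le1.
Qed.

Lemma amplify_ge p : 2/3 <= p <= 1 -> 17/20 <= amplify p.
Proof.
move=> /andP[p_ge p_le1]; rewrite /amplify /por !expr2.
set o := p + p - p * p.
have /andP[o_ge o_le1] : 8/9 <= o <= 1 by rewrite /o; apply/andP; split; nra.
set k := o * o.
have /andP[k_ge k_le1] : 64/81 <= k <= 1 by rewrite /k; apply/andP; split; nra.
set a := k * k.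
have /andP[a_ge a_le1] : 4096/6561 <= a <= 1 by rewrite /a; apply/andP; split; nra.
nra.
Qed.

Lemma amplify_le p : 0 <= p <= 1/3 -> amplify p <= 91/500.
Proof.
move=> /andP[p_ge0 p_le]; rewrite /amplify /por !expr2.
set o := p + p - p * p.
have /andP[o_ge0 o_le] : 0 <= o <= 5/9 by rewrite /o; apply/andP; split; nra.
set k := o * o.
have /andP[k_ge0 k_le] : 0 <= k <= 25/81 by rewrite /k; apply/andP; split; nra.
set a := k * k.
have /andP[a_ge0 a_le] : 0 <= a <= 625/6561 by rewrite /a; apply/andP; split; nra.
nra.
Qed.

End Amplification.

Lemma amplify_exists (Sigma : finType) (C : PACA Sigma) : constant_time C ->
  exists H : PACA Sigma, constant_time H /\
    forall w, acc_prob H w = amplify (acc_prob C w).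
Proof.
move=> C_ct; have [O [O_ct O_prob]] := or_comp_exists C_ct C_ct.
have [K [K_ct K_prob]] := and_comp_exists O_ct O_ct.
have [A [A_ct A_prob]] := and_comp_exists K_ct K_ct.
have [H [H_ct H_prob]] := or_comp_exists A_ct A_ct.
by exists H; split => // w; rewrite H_prob A_prob K_prob O_prob /amplify /por !expr2.
Qed.

Lemma two_sided_amplify (Sigma : finType) (C : PACA Sigma)
    (L : seq Sigma -> Prop) :
  constant_time C -> two_sided_for C L ->
  exists H : PACA Sigma, constant_time H /\ forall w,
    [/\ 0 <= acc_prob H w <= 1, L w -> 17/20 <= acc_prob H w
      & ~ L w -> acc_prob H w <= 91/500].
Proof.
move=> C_ct C_L; have [H [H_ct H_prob]] := amplify_exists C_ct.
exists H; split=> // w; rewrite H_prob.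
have /andP[p_ge0 p_le1] := acc_prob_ge0_le1 w C_ct.
split; first by rewrite amplify_ge0_le1 ?p_ge0.
  by move=> Lw; rewrite amplify_ge // p_le1 andbT; case: (C_L w) => /(_ Lw).
by move=> nLw; rewrite amplify_le // p_ge0; case: (C_L w) => _ /(_ nLw).
Qed.

Lemma two_sided_union (Sigma : finType) (C1 C2 : PACA Sigma)
    (L1 L2 : seq Sigma -> Prop) :
  constant_time C1 -> two_sided_for C1 L1 ->
  constant_time C2 -> two_sided_for C2 L2 ->
  exists Cu : PACA Sigma,
    constant_time Cu /\ two_sided_for Cu (fun w => L1 w \/ L2 w).
Proof.
move=> /two_sided_amplify/[apply] -[H1 [H1_ct H1_L]].
move=> /two_sided_amplify/[apply] -[H2 [H2_ct H2_L]].
have [U [U_ct U_prob]] := or_comp_exists H1_ct H2_ct.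
exists U; split=> // w; rewrite U_prob.
have [/andP[? ?] hi1 lo1] := H1_L w; have [/andP[? ?] hi2 lo2] := H2_L w.
split=> [[/hi1 | /hi2] ? | nL]; [nra | nra |].
have /lo1 ? : ~ L1 w by move=> L1w; apply: nL; left.
have /lo2 ? : ~ L2 w by move=> L2w; apply: nL; right.
nra.
Qed.

Lemma two_sided_intersection (Sigma : finType) (C1 C2 : PACA Sigma)
    (L1 L2 : seq Sigma -> Prop) :
  constant_time C1 -> two_sided_for C1 L1 ->
  constant_time C2 -> two_sided_for C2 L2 ->
  exists Ci : PACA Sigma,
    constant_time Ci /\ two_sided_for Ci (fun w => L1 w /\ L2 w).
Proof.
move=> /two_sided_amplify/[apply] -[H1 [H1_ct H1_L]].
move=> /two_sided_amplify/[apply] -[H2 [H2_ct H2_L]].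
have [I [I_ct I_prob]] := and_comp_exists H1_ct H2_ct.
exists I; split=> // w; rewrite I_prob.
have [/andP[? ?] hi1 lo1] := H1_L w; have [/andP[? ?] hi2 lo2] := H2_L w.
split=> [[/hi1 ? /hi2 ?] | nL]; first by nra.
have [L1w|/lo1 ?] := pselect (L1 w); last by nra.
have /lo2 ? : ~ L2 w by move=> L2w; apply: nL.
nra.
Qed.

Theorem mainTheorem11 (Sigma : finType) (C1 C2 : PACA Sigma)
    (L1 L2 : seq Sigma -> Prop) :
  constant_time C1 -> two_sided_for C1 L1 ->
  constant_time C2 -> two_sided_for C2 L2 ->
  (exists Cu : PACA Sigma,
      constant_time Cu /\ two_sided_for Cu (fun w => L1 w \/ L2 w)) /\
  (exists Ci : PACA Sigma,
      constant_time Ci /\ two_sided_for Ci (fun w => L1 w /\ L2 w)).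
Proof.
move=> C1_ct C1_L C2_ct C2_L; split.
  exact: two_sided_union C1_ct C1_L C2_ct C2_L.
exact: two_sided_intersection C1_ct C1_L C2_ct C2_L.
Qed.
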